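(* Let $(X,\le)$ be a wpo. For any downward-closed subset $F$ of $\widehat X$, $\eta_X^{-1}(cl(F))=\eta_X^{-1}(F)$.
   Context: A wpo is a partial order that is well-founded with no infinite antichain. An ideal of $X$ is a nonempty downward-closed directed subset; $\widehat X$ is the set of ideals of $X$ ordered by inclusion (a dcpo in which directed lubs are unions), and $\eta_X:X\to\widehat X$, $\eta_X(x)=\downarrow x$. $cl(F)$ is the closure of $F$ in the Scott topology of $\widehat X$ (open sets: upward-closed sets meeting every directed family whose lub they contain). *)

From Stdlib Require Import Classical.

Set Implicit Arguments.
Unset Strict Implicit.

Record poset := Poset {
  carrier :> Type;
  le : carrier -> carrier -> Prop;
  le_refl : forall x, le x x;
  le_antisym : forall x y, le x y -> le y x -> x = y;
  le_trans : forall x y z, le x y -> le y z -> le x z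
}.
Arguments le {p} _ _.
Arguments le_refl {p} _.
Arguments le_trans {p x y z} _ _.

Definition wellfounded_po (P : poset) : Prop :=
  well_founded (fun x y : P => le x y /\ x <> y).

Definition no_infinite_antichain (P : poset) : Prop :=
  ~ exists f : nat -> P, forall i j, i <> j -> ~ le (f i) (f j).

Definition is_wpo (P : poset) : Prop :=
  wellfounded_po P /\ no_infinite_antichain P.

Definition is_ideal (P : poset) (I : P -> Prop) : Prop :=
  (exists x, I x) /\
  (forall x y, le x y -> I y -> I x) /\
  (forall x y, I x -> I y -> exists z, I z /\ le x z /\ le y z).

Definition ideal (P : poset) := { I : P -> Prop | is_ideal I }.

Definition iset (P : poset) (I : ideal P) : P -> Prop := proj1_sig I.

Definition ile (P : poset) (I J : ideal P) : Prop :=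
  forall x, iset I x -> iset J x.

Lemma principal_is_ideal (P : poset) (x : P) : is_ideal (fun y => le y x).
Proof.
  split; [exists x; apply le_refl|split].
  - intros a b Hab Hb; exact (le_trans Hab Hb).
  - intros a b Ha Hb; exists x; repeat split; auto using le_refl.
Qed.

Definition eta (P : poset) (x : P) : ideal P :=
  exist _ (fun y => le y x) (principal_is_ideal x).

Definition directed_family (P : poset) (D : ideal P -> Prop) : Prop :=
  (exists I, D I) /\
  (forall I J, D I -> D J -> exists K, D K /\ ile I K /\ ile J K).

Definition is_union (P : poset) (D : ideal P -> Prop) (J : ideal P) : Prop :=
  forall x, iset J x <-> exists I, D I /\ iset I x.

Definition scott_open (P : poset) (U : ideal P -> Prop) : Prop :=
  (forall I J, ile I J -> U I -> U J) /\
  (forall D J, directed_family D -> is_union D J -> U J -> exists I, D I /\ U I).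

Definition scott_closed (P : poset) (C : ideal P -> Prop) : Prop :=
  scott_open (fun I => ~ C I).

Definition scott_cl (P : poset) (F : ideal P -> Prop) : ideal P -> Prop :=
  fun I => forall C, scott_closed C -> (forall J, F J -> C J) -> C I.

Definition down_closed (P : poset) (F : ideal P -> Prop) : Prop :=
  forall I J, ile J I -> F I -> F J.

(* The complement of the Scott-open set of ideals containing [x] is a Scott-closed
   set; it contains the down-closed set [F] as soon as [F] misses [eta x], so then
   [eta x] is not in the closure of [F] either. *)
From Stdlib Require Import Classical.

Lemma scott_closedC {P : poset} {U : ideal P -> Prop} :
  scott_open U -> scott_closed (fun I => ~ U I).
Proof.
  intros [Uup Uinacc]; split.
  - intros I J HIJ HI; apply NNPP in HI; intros HJ; exact (HJ (Uup I J HIJ HI)).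
  - intros D J HD HDJ HJ; apply NNPP in HJ.
    destruct (Uinacc D J HD HDJ HJ) as [I [DI UI]].
    exists I; split; [exact DI | intros nUI; exact (nUI UI)].
Qed.

Lemma scott_open_mem {P : poset} (x : P) : scott_open (fun I => iset I x).
Proof.
  split.
  - intros I J HIJ Ix; exact (HIJ x Ix).
  - intros D J _ HDJ Jx; exact (proj1 (HDJ x) Jx).
Qed.

Lemma eta_ile {P : poset} {x : P} {J : ideal P} : iset J x -> ile (eta x) J.
Proof.
  intros Jx y yx; destruct (proj2_sig J) as [_ [Jdown _]]; exact (Jdown y x yx Jx).
Qed.

Lemma scott_cl_ext (P : poset) (F : ideal P -> Prop) (I : ideal P) :
  F I -> scott_cl F I.
Proof. intros FI C _ FC; exact (FC I FI). Qed.

Theorem lemma3p8 (P : poset) (HP : is_wpo P) (F : ideal P -> Prop)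
  (HF : down_closed F) :
  forall x : P, scott_cl F (eta x) <-> F (eta x).
Proof.
  intro x; split; [| apply scott_cl_ext].
  intros Hcl; apply NNPP; intros nFx.
  assert (F_avoids_x : forall J, F J -> ~ iset J x)
    by (intros J FJ Jx; exact (nFx (HF J (eta x) (eta_ile Jx) FJ))).
  exact (Hcl _ (scott_closedC (scott_open_mem x)) F_avoids_x (le_refl x)).
Qed.
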